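(* (1) The full subcategory $\mathbf{T_D MT_P}$ of $\mathbf{MT_P}$ consisting of $T_D$-algebras is equivalent to $\mathbf{MT_P}$ (the inclusion functor being an equivalence). (2) $\mathbf{Frm}$ is equivalent to $\mathbf{T_D MT_P}$.
   Context: An MT-algebra is a pair $(M,\square)$ where $M$ is a complete boolean algebra and $\square:M\to M$ satisfies $\square 1=1$, $\square(a\wedge b)=\square a\wedge\square b$, $\square a\le a$, $\square a\le\square\square a$; $\Diamond a=\neg\square\neg a$; open: $\square a=a$; locally closed: $a=\square b\wedge\Diamond c$; $\mathcal O M$, $\mathcal{LC}M$ the sets of open and locally closed elements ($\mathcal O M$ is a frame). $M$ is a $T_D$-algebra if every element of $M$ is a join of locally closed elements. A proximity morphism $f:M\to N$ is a map with (P1) $f|_{\mathcal O M}:\mathcal O M\to\mathcal O N$ a frame morphism; (P2) $f(a\wedge b)=f(a)\wedge f(b)$; (P3) $f(\bigvee S)=\bigvee f[S]$ for finite $S\subseteq\mathcal{LC}M$; (P4) $f(a)=\bigvee\{f(x):x\in\mathcal{LC}M, x\le a\}$. $\mathbf{MT_P}$ is the category of MT-algebras and proximity morphisms with composition $(g\star f)(a)=\bigvee\{g(f(x)):x\in\mathcal{LC}M_1,x\le a\}$ and identities $1_M(a)=\bigvee\{x\in\mathcal{LC}M:x\le a\}$. $\mathbf{Frm}$ is the category of frames and frame morphisms. *)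

From Stdlib Require Import List.
Set Implicit Arguments.

Definition img {A B : Type} (f : A -> B) (S : A -> Prop) : B -> Prop :=
  fun y => exists x, S x /\ y = f x.

Record CBA : Type := {
  cb_car :> Type;
  le : cb_car -> cb_car -> Prop;
  le_refl : forall a, le a a;
  le_antisym : forall a b, le a b -> le b a -> a = b;
  le_trans : forall a b c, le a b -> le b c -> le a c;
  top : cb_car;
  bot : cb_car;
  meet : cb_car -> cb_car -> cb_car;
  join : cb_car -> cb_car -> cb_car;
  neg : cb_car -> cb_car;
  Sup : (cb_car -> Prop) -> cb_car;
  top_max : forall a, le a top;
  bot_min : forall a, le bot a;
  meet_glb : forall x a b, le x (meet a b) <-> le x a /\ le x b;
  join_lub : forall a b x, le (join a b) x <-> le a x /\ le b x;
  Sup_lub : forall S x, le (Sup S) x <-> (forall s, S s -> le s x);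
  meet_join_distr : forall a b c, meet a (join b c) = join (meet a b) (meet a c);
  compl_meet : forall a, meet a (neg a) = bot;
  compl_join : forall a, join a (neg a) = top
}.
Arguments le {_}. Arguments top {_}. Arguments bot {_}. Arguments meet {_}.
Arguments join {_}. Arguments neg {_}. Arguments Sup {_}.

Record MTAlg : Type := {
  mt_cba :> CBA;
  box : mt_cba -> mt_cba;
  box_top : box top = top;
  box_meet : forall a b, box (meet a b) = meet (box a) (box b);
  box_defl : forall a, le (box a) a;
  box_idem : forall a, le (box a) (box (box a))
}.
Arguments box {_}.

Definition dia {M : MTAlg} (a : M) : M := neg (box (neg a)).
Definition is_open {M : MTAlg} (a : M) : Prop := box a = a.
Definition is_LC {M : MTAlg} (a : M) : Prop :=
  exists b c : M, a = meet (box b) (dia c).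

Definition is_TD (M : MTAlg) : Prop :=
  forall a : M, exists S : M -> Prop, (forall x, S x -> is_LC x) /\ a = Sup S.

(* (P1): the restriction of f to O M is a frame morphism O M -> O N.
   The frame operations of O M (top, binary meet, arbitrary joins)
   coincide with those of M, so this is written out directly. *)
Definition P1 {M N : MTAlg} (f : M -> N) : Prop :=
  (forall a : M, is_open a -> is_open (f a)) /\
  f top = top /\
  (forall a b : M, is_open a -> is_open b -> f (meet a b) = meet (f a) (f b)) /\
  (forall S : M -> Prop, (forall s, S s -> is_open s) -> f (Sup S) = Sup (img f S)).

Definition P2 {M N : MTAlg} (f : M -> N) : Prop :=
  forall a b : M, f (meet a b) = meet (f a) (f b).

(* finite subsets of LC M are given by lists *)
Definition P3 {M N : MTAlg} (f : M -> N) : Prop :=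
  forall l : list M, (forall x, In x l -> is_LC x) ->
    f (Sup (fun x => In x l)) = Sup (img f (fun x => In x l)).

Definition P4 {M N : MTAlg} (f : M -> N) : Prop :=
  forall a : M, f a = Sup (img f (fun x => is_LC x /\ le x a)).

Definition proximity {M N : MTAlg} (f : M -> N) : Prop :=
  P1 f /\ P2 f /\ P3 f /\ P4 f.

Definition prox_comp {M1 M2 M3 : MTAlg} (g : M2 -> M3) (f : M1 -> M2) : M1 -> M3 :=
  fun a => Sup (img (fun x => g (f x)) (fun x => is_LC x /\ le x a)).

Definition prox_id (M : MTAlg) : M -> M :=
  fun a => Sup (fun x => is_LC x /\ le x a).

Record Frame : Type := {
  fr_car :> Type;
  fle : fr_car -> fr_car -> Prop;
  fle_refl : forall a, fle a a;
  fle_antisym : forall a b, fle a b -> fle b a -> a = b;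
  fle_trans : forall a b c, fle a b -> fle b c -> fle a c;
  ftop : fr_car;
  fmeet : fr_car -> fr_car -> fr_car;
  fSup : (fr_car -> Prop) -> fr_car;
  ftop_max : forall a, fle a ftop;
  fmeet_glb : forall x a b, fle x (fmeet a b) <-> fle x a /\ fle x b;
  fSup_lub : forall S x, fle (fSup S) x <-> (forall s, S s -> fle s x);
  frame_distr : forall a S, fmeet a (fSup S) = fSup (img (fmeet a) S)
}.
Arguments fle {_}. Arguments ftop {_}. Arguments fmeet {_}. Arguments fSup {_}.

Definition frame_morphism {L K : Frame} (h : L -> K) : Prop :=
  h ftop = ftop /\
  (forall a b, h (fmeet a b) = fmeet (h a) (h b)) /\
  (forall S, h (fSup S) = fSup (img h S)).

(* A category presented by objects, raw arrows, a predicate singling out the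
   genuine morphisms, composition, identities and equality of arrows. *)
Record CatData : Type := {
  Ob : Type;
  Hom : Ob -> Ob -> Type;
  isHom : forall A B, Hom A B -> Prop;
  cmp : forall A B C, Hom B C -> Hom A B -> Hom A C;
  idm : forall A, Hom A A;
  heq : forall A B, Hom A B -> Hom A B -> Prop
}.
Arguments isHom {_ _ _}. Arguments cmp {_ _ _ _}. Arguments idm {_}.
Arguments heq {_ _ _}.

Record Functor (C D : CatData) : Type := {
  fob : Ob C -> Ob D;
  fmor : forall A B, Hom C A B -> Hom D (fob A) (fob B);
  fmor_hom : forall A B (f : Hom C A B), isHom f -> isHom (fmor _ _ f);
  fmor_heq : forall A B (f g : Hom C A B), isHom f -> isHom g -> heq f g ->
               heq (fmor _ _ f) (fmor _ _ g);
  fmor_id : forall A, heq (fmor _ _ (idm A)) (idm (fob A));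
  fmor_cmp : forall A B E (f : Hom C A B) (g : Hom C B E), isHom f -> isHom g ->
               heq (fmor _ _ (cmp g f)) (cmp (fmor _ _ g) (fmor _ _ f))
}.
Arguments fob {C D}. Arguments fmor {C D} _ {A B}.

Definition is_iso {C : CatData} {A B : Ob C} (f : Hom C A B) : Prop :=
  isHom f /\ exists g : Hom C B A, isHom g /\
    heq (cmp g f) (idm A) /\ heq (cmp f g) (idm B).

Definition natiso_to_id {C D : CatData} (F : Functor C D) (G : Functor D C) : Prop :=
  exists eta : forall A : Ob C, Hom C (fob G (fob F A)) A,
    (forall A, is_iso (eta A)) /\
    (forall A B (f : Hom C A B), isHom f ->
       heq (cmp f (eta A)) (cmp (eta B) (fmor G (fmor F f)))).

Definition is_equivalence {C D : CatData} (F : Functor C D) : Prop :=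
  exists G : Functor D C, natiso_to_id F G /\ natiso_to_id G F.

Definition equivalent (C D : CatData) : Prop :=
  exists F : Functor C D, is_equivalence F.

Definition MTP : CatData := {|
  Ob := MTAlg;
  Hom := fun M N => M -> N;
  isHom := fun M N f => proximity f;
  cmp := fun M1 M2 M3 g f => prox_comp g f;
  idm := prox_id;
  heq := fun M N f g => forall a, f a = g a
|}.

Definition TDMTP : CatData := {|
  Ob := { M : MTAlg | is_TD M };
  Hom := fun M N => proj1_sig M -> proj1_sig N;
  isHom := fun M N f => proximity f;
  cmp := fun M1 M2 M3 g f => prox_comp g f;
  idm := fun M => prox_id (proj1_sig M);
  heq := fun M N f g => forall a, f a = g a
|}.

Definition Frm : CatData := {|
  Ob := Frame;
  Hom := fun L K => L -> K;
  isHom := fun L K h => frame_morphism h;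
  cmp := fun L1 L2 L3 g f => fun a => g (f a);
  idm := fun L => fun a => a;
  heq := fun L K f g => forall a, f a = g a
|}.

Definition incl_TD : Functor TDMTP MTP.
Proof.
  refine (@Build_Functor TDMTP MTP (fun M : { M : MTAlg | is_TD M } => proj1_sig M) (fun A B f => f) _ _ _ _).
  - intros A B f Hf; exact Hf.
  - intros A B f g _ _ H; exact H.
  - intros A a; reflexivity.
  - intros A B E f g _ _ a; reflexivity.
Defined.

(* A proximity morphism is determined by its restriction to the opens: (P2) and (P3) force
   f (u ∧ ¬v) = f u ∧ ¬f v for open u, v, and (P4) recovers f from these locally closed
   values.  Conversely, the same formula extends any frame morphism between frames of opens
   to a proximity morphism ([prox_ext]).  So M ↦ O M is fully faithful from MT_P to Frm, and
   it remains to realise every frame L as the opens of a T_D-algebra: embed L into a complete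
   Boolean algebra B(L) preserving finite meets and all joins (regular sets of pairs (a, b)
   read as a ∧ ¬b), with interior given by the largest element of L below.  Each point (a, b)
   lies in the locally closed element a ∧ ¬b, so B(L) is T_D, and B(O M) ≅ M in MT_P for
   every M, which gives both equivalences. *)

From Stdlib Require Import List Classical ProofIrrelevance.
From Stdlib Require Import FunctionalExtensionality PropExtensionality.

Section BooleanAlgebra.
Context {B : CBA}.
Implicit Types a b c d x y z w : B.

Lemma meet_le_l a b : le (meet a b) a.
Proof. exact (proj1 (proj1 (meet_glb _ _ a b) (le_refl _ _))). Qed.
Lemma meet_le_r a b : le (meet a b) b.
Proof. exact (proj2 (proj1 (meet_glb _ _ a b) (le_refl _ _))). Qed.
Lemma le_meet x a b : le x a -> le x b -> le x (meet a b).
Proof. intros; apply meet_glb; auto. Qed.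
Lemma join_ge_l a b : le a (join a b).
Proof. exact (proj1 (proj1 (join_lub _ a b _) (le_refl _ _))). Qed.
Lemma join_ge_r a b : le b (join a b).
Proof. exact (proj2 (proj1 (join_lub _ a b _) (le_refl _ _))). Qed.
Lemma join_le a b x : le a x -> le b x -> le (join a b) x.
Proof. intros; apply join_lub; auto. Qed.
Lemma Sup_ge (S : B -> Prop) s : S s -> le s (Sup S).
Proof. exact (proj1 (Sup_lub _ S _) (le_refl _ _) s). Qed.
Lemma Sup_le (S : B -> Prop) x : (forall s, S s -> le s x) -> le (Sup S) x.
Proof. apply Sup_lub. Qed.

Lemma meet_le_compat a b c d : le a c -> le b d -> le (meet a b) (meet c d).
Proof.
  intros; apply le_meet;
    [eapply le_trans; [apply meet_le_l |] | eapply le_trans; [apply meet_le_r |]]; auto.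
Qed.
Lemma meet_comm a b : meet a b = meet b a.
Proof. apply le_antisym; auto using le_meet, meet_le_l, meet_le_r. Qed.
Lemma join_comm a b : join a b = join b a.
Proof. apply le_antisym; auto using join_le, join_ge_l, join_ge_r. Qed.
Lemma meet_assoc a b c : meet a (meet b c) = meet (meet a b) c.
Proof.
  apply le_antisym; repeat apply le_meet;
    eauto using le_trans, meet_le_l, meet_le_r.
Qed.

Lemma meet_eq_l a b : le a b -> meet a b = a.
Proof. intros; apply le_antisym; auto using meet_le_l, le_meet, le_refl. Qed.
Lemma meet_top_r a : meet a top = a.
Proof. apply meet_eq_l, top_max. Qed.
Lemma meet_bot_r a : meet a bot = bot.
Proof. rewrite meet_comm; apply meet_eq_l, bot_min. Qed.
Lemma join_bot_r a : join a bot = a.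
Proof. apply le_antisym; auto using join_le, le_refl, bot_min, join_ge_l. Qed.
Lemma le_bot_eq a : le a bot -> a = bot.
Proof. intros; apply le_antisym; auto using bot_min. Qed.
Lemma meet_join_distr_r a b c : meet (join b c) a = join (meet b a) (meet c a).
Proof. rewrite meet_comm, meet_join_distr, (meet_comm a b), (meet_comm a c); reflexivity. Qed.

Lemma le_join_neg_iff a b c : le (meet a b) c <-> le a (join (neg b) c).
Proof.
  split; intro H.
  - rewrite <- (meet_top_r a), <- (compl_join _ b), meet_join_distr.
    apply join_le.
    + eapply le_trans; [exact H | apply join_ge_r].
    + eapply le_trans; [apply meet_le_r | apply join_ge_l].
  - eapply le_trans; [apply meet_le_compat; [exact H | apply le_refl] |].
    rewrite meet_join_distr_r, meet_comm, compl_meet.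
    apply join_le; [apply bot_min | apply meet_le_l].
Qed.

Lemma neg_unique a b : meet a b = bot -> join a b = top -> b = neg a.
Proof.
  intros Hm Hj. apply le_antisym.
  - rewrite <- (meet_top_r b), <- (compl_join _ a), meet_join_distr, meet_comm, Hm.
    apply join_le; [apply bot_min | apply meet_le_r].
  - rewrite <- (meet_top_r (neg a)), <- Hj, meet_join_distr, meet_comm, compl_meet.
    apply join_le; [apply bot_min | apply meet_le_r].
Qed.

Lemma neg_involutive a : neg (neg a) = a.
Proof.
  symmetry; apply neg_unique;
    [rewrite meet_comm; apply compl_meet | rewrite join_comm; apply compl_join].
Qed.
Lemma neg_bot : neg (@bot B) = top.
Proof.
  symmetry; apply neg_unique; [apply meet_top_r | rewrite join_comm; apply join_bot_r].
Qed.

Lemma le_neg_iff a b : le a (neg b) <-> le (meet a b) bot.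
Proof. rewrite le_join_neg_iff, join_bot_r; tauto. Qed.
Lemma le_iff_meet_neg a b : le a b <-> le (meet a (neg b)) bot.
Proof. rewrite le_join_neg_iff, neg_involutive, join_bot_r; tauto. Qed.

Lemma neg_le_compat a b : le a b -> le (neg b) (neg a).
Proof.
  intros H. apply le_neg_iff.
  eapply le_trans; [apply meet_le_compat; [apply le_refl | exact H] |].
  rewrite meet_comm, compl_meet; apply le_refl.
Qed.

Lemma neg_join a b : neg (join a b) = meet (neg a) (neg b).
Proof.
  apply le_antisym.
  - apply le_meet; apply neg_le_compat; auto using join_ge_l, join_ge_r.
  - apply le_neg_iff. rewrite meet_join_distr. apply join_le.
    + rewrite meet_comm, meet_assoc, compl_meet, meet_comm, meet_bot_r. apply le_refl.
    + rewrite <- meet_assoc, (meet_comm (neg b) b), compl_meet, meet_bot_r. apply le_refl.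
Qed.
Lemma neg_meet a b : neg (meet a b) = join (neg a) (neg b).
Proof.
  rewrite <- (neg_involutive a), <- (neg_involutive b), <- neg_join, !neg_involutive.
  reflexivity.
Qed.

Lemma meet_neg_le_meet_neg x y z w :
  le (meet x (neg y)) (meet z (neg w)) <-> le x (join z y) /\ le (meet x w) y.
Proof.
  rewrite (le_iff_meet_neg (meet x w)), <- (meet_assoc x w), (meet_comm w),
    (meet_assoc x (neg y)), <- le_neg_iff.
  assert (E : le (meet x (neg y)) z <-> le x (join z y)).
  { rewrite le_join_neg_iff, neg_involutive, (join_comm y). tauto. }
  split.
  - intros H; split.
    + apply E; eapply le_trans; [exact H | apply meet_le_l].
    + eapply le_trans; [exact H | apply meet_le_r].
  - intros [H1 H2]; apply le_meet; auto; apply E; auto.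
Qed.

Lemma meet_neg_le_join u v u1 v1 c :
  le (meet u (neg v)) (join (meet u1 (neg v1)) c) <->
  le (meet (meet u v1) (neg v)) c /\ le (meet u (neg (join v u1))) c.
Proof.
  rewrite <- (neg_involutive (meet u1 (neg v1))) at 1.
  rewrite <- le_join_neg_iff, neg_meet, neg_involutive, meet_join_distr, join_lub, neg_join.
  rewrite <- !meet_assoc, (meet_comm (neg v) (neg u1)), (meet_comm (neg v) v1). tauto.
Qed.

Lemma Sup_le_compat (S T : B -> Prop) : (forall x, S x -> T x) -> le (Sup S) (Sup T).
Proof. intros H; apply Sup_le; intros; apply Sup_ge; auto. Qed.
Lemma Sup_ext (S T : B -> Prop) : (forall x, S x <-> T x) -> Sup S = Sup T.
Proof. intros H; apply le_antisym; apply Sup_le_compat; firstorder. Qed.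
Lemma Sup_empty (S : B -> Prop) : (forall x, ~ S x) -> Sup S = bot.
Proof. intros H; apply le_bot_eq, Sup_le; intros s Hs; exfalso; eapply H; eauto. Qed.
Lemma Sup_pair a b : Sup (fun t => t = a \/ t = b) = join a b.
Proof.
  apply le_antisym.
  - apply Sup_le; intros s [-> | ->]; auto using join_ge_l, join_ge_r.
  - apply join_le; apply Sup_ge; auto.
Qed.

Lemma meet_Sup_distr x (S : B -> Prop) : meet x (Sup S) = Sup (img (meet x) S).
Proof.
  apply le_antisym.
  - rewrite meet_comm. apply le_join_neg_iff, Sup_le. intros s Hs.
    rewrite <- (meet_top_r s), <- (compl_join _ x), meet_join_distr.
    apply join_le.
    + eapply le_trans; [| apply join_ge_r]. rewrite meet_comm. apply Sup_ge; exists s; auto.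
    + eapply le_trans; [apply meet_le_r | apply join_ge_l].
  - apply Sup_le. intros y [s [Hs ->]]. apply meet_le_compat; auto using le_refl, Sup_ge.
Qed.

End BooleanAlgebra.

Section SupOfImage.
Context {A : Type} {B : CBA} (f : A -> B).

Lemma Sup_img_le (S : A -> Prop) x : (forall s, S s -> le (f s) x) -> le (Sup (img f S)) x.
Proof. intros H; apply Sup_le; intros y [s [Hs ->]]; auto. Qed.
Lemma Sup_img_ge (S : A -> Prop) s : S s -> le (f s) (Sup (img f S)).
Proof. intros H; apply Sup_ge; exists s; auto. Qed.

Lemma Sup_img_nil : Sup (img f (fun y => In y nil)) = bot.
Proof. apply Sup_empty; intros x [s [[] _]]. Qed.
Lemma Sup_img_cons x l :
  Sup (img f (fun y => In y (x :: l))) = join (f x) (Sup (img f (fun y => In y l))).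
Proof.
  apply le_antisym.
  - apply Sup_img_le. intros s [<- | H]; [apply join_ge_l |].
    eapply le_trans; [apply (Sup_img_ge (fun y => In y l)), H | apply join_ge_r].
  - apply join_le; [apply Sup_img_ge; left; reflexivity |].
    apply Sup_img_le; intros s Hs; apply Sup_img_ge; right; exact Hs.
Qed.

End SupOfImage.

Lemma Sup_img_id {B : CBA} (S : B -> Prop) : Sup (img (fun x => x) S) = Sup S.
Proof. apply Sup_ext; intros y; split; [intros [x [Hx ->]]; auto | exists y; auto]. Qed.

Lemma Sup_In_nil {B : CBA} : Sup (fun y : B => In y nil) = bot.
Proof. rewrite <- (Sup_img_id (fun y => In y nil)). apply Sup_img_nil. Qed.
Lemma Sup_In_cons {B : CBA} (x : B) l :
  Sup (fun y => In y (x :: l)) = join x (Sup (fun y => In y l)).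
Proof.
  rewrite <- (Sup_img_id (fun y => In y (x :: l))), <- (Sup_img_id (fun y => In y l)).
  apply Sup_img_cons.
Qed.

Ltac meet_le := first [ apply le_refl
                      | eapply le_trans; [apply meet_le_l |]; meet_le
                      | eapply le_trans; [apply meet_le_r |]; meet_le ].
Ltac solve_meet := repeat apply le_meet; meet_le.

Section MTAlgebra.
Context {M : MTAlg}.
Implicit Types a b u v : M.

Lemma box_monotone a b : le a b -> le (box a) (box b).
Proof. intros H. rewrite <- (meet_eq_l _ _ H), box_meet. apply meet_le_r. Qed.
Lemma open_box a : is_open (box a).
Proof. apply le_antisym; [apply box_defl | apply box_idem]. Qed.
Lemma open_top : is_open (@top M).
Proof. apply box_top. Qed.
Lemma open_bot : is_open (@bot M).
Proof. apply le_bot_eq, box_defl. Qed.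
Lemma open_meet a b : is_open a -> is_open b -> is_open (meet a b).
Proof. unfold is_open; intros; rewrite box_meet; congruence. Qed.
Lemma open_Sup (S : M -> Prop) : (forall s, S s -> is_open s) -> is_open (Sup S).
Proof.
  intros H. apply le_antisym; [apply box_defl |]. apply Sup_le. intros s Hs.
  rewrite <- (H s Hs). apply box_monotone, Sup_ge; auto.
Qed.
Lemma open_join a b : is_open a -> is_open b -> is_open (join a b).
Proof. intros. rewrite <- Sup_pair. apply open_Sup. intros s [-> | ->]; auto. Qed.

Lemma LC_iff_open_diff (x : M) :
  is_LC x <-> exists u v, is_open u /\ is_open v /\ x = meet u (neg v).
Proof.
  split.
  - intros [b [c ->]]. exists (box b), (box (neg c)). auto using open_box.
  - intros [u [v [Hu [Hv ->]]]]. exists u, (neg v). unfold dia. rewrite neg_involutive. congruence.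
Qed.
Lemma LC_open u : is_open u -> is_LC u.
Proof.
  intros H. apply LC_iff_open_diff. exists u, bot.
  rewrite neg_bot, meet_top_r. auto using open_bot.
Qed.
Lemma LC_neg_open v : is_open v -> is_LC (neg v).
Proof.
  intros H. apply LC_iff_open_diff. exists top, v.
  rewrite meet_comm, meet_top_r. auto using open_top.
Qed.

End MTAlgebra.

Section ProximityOnOpens.
Context {M N : MTAlg}.
Implicit Types f : M -> N.

Lemma P2_monotone f : P2 f -> forall a b, le a b -> le (f a) (f b).
Proof. intros H a b Hab. rewrite <- (meet_eq_l _ _ Hab), H. apply meet_le_r. Qed.

Lemma P1_bot f : P1 f -> f bot = bot.
Proof.
  intros [_ [_ [_ HS]]]. rewrite <- (Sup_empty (fun _ : M => False)) by auto.
  rewrite HS by (intros s []). apply Sup_empty. intros x [s [[] _]].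
Qed.
Lemma P1_monotone f : P1 f -> forall u v, is_open u -> is_open v ->
  le u v -> le (f u) (f v).
Proof.
  intros [_ [_ [Hm _]]] u v Hu Hv H. rewrite <- (meet_eq_l _ _ H), Hm; auto. apply meet_le_r.
Qed.
Lemma P1_join f : P1 f -> forall u v, is_open u -> is_open v ->
  f (join u v) = join (f u) (f v).
Proof.
  intros [_ [_ [_ HS]]] u v Hu Hv. rewrite <- !Sup_pair, HS by (intros s [-> | ->]; auto).
  apply Sup_ext. intros y; split.
  - intros [s [[-> | ->] ->]]; auto.
  - intros [-> | ->]; [exists u | exists v]; auto.
Qed.

(* (P3) applied to the cover [u; neg u] of [top]. *)
Lemma proximity_neg f : proximity f -> forall u, is_open u -> f (neg u) = neg (f u).
Proof.
  intros [H1 [H2 [H3 _]]] u Hu. apply neg_unique.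
  - rewrite <- H2, compl_meet. apply P1_bot; auto.
  - specialize (H3 (u :: neg u :: nil)).
    rewrite !Sup_In_cons, Sup_In_nil, join_bot_r, compl_join,
      !Sup_img_cons, Sup_img_nil, join_bot_r in H3.
    rewrite <- H3 by (intros x [<- | [<- | []]]; auto using LC_open, LC_neg_open).
    apply H1.
Qed.

(* [prox_comp g f] is [lc_hull (fun x => g (f x))] by definition, and (P4) says [f = lc_hull f]. *)
Definition lc_hull (k : M -> N) (a : M) : N := Sup (img k (fun x => is_LC x /\ le x a)).

Definition preserves_open_diff (k : M -> N) : Prop :=
  forall u v, is_open u -> is_open v -> k (meet u (neg v)) = meet (k u) (neg (k v)).

Lemma proximity_preserves_open_diff f : proximity f -> preserves_open_diff f.
Proof.
  intros Hf u v Hu Hv. rewrite (proj1 (proj2 Hf)), (proximity_neg _ Hf); auto.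
Qed.

Lemma lc_hull_eq (k1 k2 : M -> N) :
  preserves_open_diff k1 -> preserves_open_diff k2 ->
  (forall u, is_open u -> k1 u = k2 u) -> forall a, lc_hull k1 a = lc_hull k2 a.
Proof.
  intros H1 H2 H a. apply Sup_ext.
  assert (E : forall x, is_LC x -> k1 x = k2 x).
  { intros x Hx. apply LC_iff_open_diff in Hx as [u [v [Hu [Hv ->]]]].
    rewrite H1, H2, !H; auto. }
  intros y; split; intros [x [[Hx Hxa] ->]]; exists x; rewrite E; auto.
Qed.

End ProximityOnOpens.

Lemma prox_id_lc_hull (M : MTAlg) (a : M) : prox_id M a = lc_hull (fun x => x) a.
Proof. symmetry; apply Sup_img_id. Qed.

Lemma id_preserves_open_diff (M : MTAlg) : preserves_open_diff (fun x : M => x).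
Proof. intros u v _ _; reflexivity. Qed.

Lemma comp_preserves_open_diff {M1 M2 M3 : MTAlg} (g : M2 -> M3) (f : M1 -> M2) :
  proximity f -> proximity g -> preserves_open_diff (fun x => g (f x)).
Proof.
  intros Hf Hg u v Hu Hv. cbv beta.
  rewrite (proximity_preserves_open_diff f), (proximity_preserves_open_diff g); auto;
    apply Hf; auto.
Qed.

Lemma prox_comp_ext {M1 M2 M3 M2' : MTAlg}
  (g : M2 -> M3) (f : M1 -> M2) (g' : M2' -> M3) (f' : M1 -> M2') :
  proximity f -> proximity g -> proximity f' -> proximity g' ->
  (forall u, is_open u -> g (f u) = g' (f' u)) ->
  forall a, prox_comp g f a = prox_comp g' f' a.
Proof. intros; apply lc_hull_eq; auto using comp_preserves_open_diff. Qed.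

Lemma prox_comp_eq_id {M1 M2 : MTAlg} (g : M2 -> M1) (f : M1 -> M2) :
  proximity f -> proximity g -> (forall u, is_open u -> g (f u) = u) ->
  forall a, prox_comp g f a = prox_id M1 a.
Proof.
  intros. rewrite prox_id_lc_hull.
  apply lc_hull_eq; auto using comp_preserves_open_diff, id_preserves_open_diff.
Qed.

Lemma proximity_eq_prox_id {M : MTAlg} (h : M -> M) :
  proximity h -> (forall u, is_open u -> h u = u) -> forall a, h a = prox_id M a.
Proof.
  intros Hh H a. rewrite (proj2 (proj2 (proj2 Hh))), prox_id_lc_hull.
  apply lc_hull_eq; auto using proximity_preserves_open_diff, id_preserves_open_diff.
Qed.

Lemma proximity_eq_prox_comp {M1 M2 M3 : MTAlg} (h : M1 -> M3) (g : M2 -> M3) (f : M1 -> M2) :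
  proximity h -> proximity f -> proximity g -> (forall u, is_open u -> h u = g (f u)) ->
  forall a, h a = prox_comp g f a.
Proof.
  intros Hh Hf Hg H a. rewrite (proj2 (proj2 (proj2 Hh))).
  apply lc_hull_eq; auto using proximity_preserves_open_diff, comp_preserves_open_diff.
Qed.

Lemma prox_comp_open {M1 M2 M3 : MTAlg} (g : M2 -> M3) (f : M1 -> M2) u :
  proximity f -> proximity g -> is_open u -> prox_comp g f u = g (f u).
Proof.
  intros Hf Hg Hu. apply le_antisym.
  - apply Sup_img_le. intros x [_ Hx].
    apply (P2_monotone g (proj1 (proj2 Hg))), (P2_monotone f (proj1 (proj2 Hf))); auto.
  - apply (Sup_img_ge (fun x => g (f x))). split; [apply LC_open; auto | apply le_refl].
Qed.

Lemma prox_id_open (M : MTAlg) (u : M) : is_open u -> prox_id M u = u.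
Proof.
  intros Hu. apply le_antisym;
    [apply Sup_le; tauto | apply Sup_ge; split; [apply LC_open; auto | apply le_refl]].
Qed.

Section Extension.
Context {M N : MTAlg} (phi : M -> N) (Hphi : P1 phi).

Definition prox_ext (a : M) : N :=
  Sup (fun y => exists u v, is_open u /\ is_open v /\ le (meet u (neg v)) a /\
                       y = meet (phi u) (neg (phi v))).

Let phi_meet : forall u v, is_open u -> is_open v -> phi (meet u v) = meet (phi u) (phi v)
  := proj1 (proj2 (proj2 Hphi)).
Let phi_Sup : forall S, (forall s, S s -> is_open s) -> phi (Sup S) = Sup (img phi S)
  := proj2 (proj2 (proj2 Hphi)).

Lemma open_diff_image_le u v u' v' :
  is_open u -> is_open v -> is_open u' -> is_open v' ->
  le (meet u' (neg v')) (meet u (neg v)) ->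
  le (meet (phi u') (neg (phi v'))) (meet (phi u) (neg (phi v))).
Proof.
  intros Hu Hv Hu' Hv' [H1 H2]%meet_neg_le_meet_neg. apply meet_neg_le_meet_neg. split.
  - rewrite <- P1_join; auto. apply P1_monotone; auto using open_join.
  - rewrite <- phi_meet; auto. apply P1_monotone; auto using open_meet.
Qed.

Lemma prox_ext_diff u v : is_open u -> is_open v ->
  prox_ext (meet u (neg v)) = meet (phi u) (neg (phi v)).
Proof.
  intros Hu Hv. apply le_antisym.
  - apply Sup_le. intros y [u' [v' [Hu' [Hv' [Hle ->]]]]]. apply open_diff_image_le; auto.
  - apply Sup_ge. exists u, v. auto using le_refl.
Qed.

Lemma prox_ext_open u : is_open u -> prox_ext u = phi u.
Proof.
  intros Hu. pose proof (prox_ext_diff u bot Hu open_bot) as E.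
  rewrite neg_bot, meet_top_r, (P1_bot phi Hphi), neg_bot, meet_top_r in E. exact E.
Qed.

Lemma prox_ext_monotone a b : le a b -> le (prox_ext a) (prox_ext b).
Proof.
  intros H. apply Sup_le_compat. intros y [u [v [Hu [Hv [Hle ->]]]]].
  exists u, v. repeat split; eauto using le_trans.
Qed.

Lemma prox_ext_P1 : P1 prox_ext.
Proof.
  split; [| split; [| split]].
  - intros a Ha. rewrite prox_ext_open; auto. apply Hphi; auto.
  - rewrite prox_ext_open by apply open_top. apply Hphi.
  - intros a b Ha Hb. rewrite !prox_ext_open; auto using open_meet.
  - intros S HS. rewrite prox_ext_open, phi_Sup by auto using open_Sup.
    apply Sup_ext. intros y; split; intros [s [Hs ->]]; exists s; rewrite prox_ext_open; auto.
Qed.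

Lemma prox_ext_P2 : P2 prox_ext.
Proof.
  intros a b. apply le_antisym.
  - apply le_meet; apply prox_ext_monotone; [apply meet_le_l | apply meet_le_r].
  - unfold prox_ext at 1 2. rewrite meet_Sup_distr. apply Sup_img_le.
    intros q [u2 [v2 [Hu2 [Hv2 [Hle2 ->]]]]].
    rewrite meet_comm, meet_Sup_distr. apply Sup_img_le.
    intros p [u1 [v1 [Hu1 [Hv1 [Hle1 ->]]]]].
    apply Sup_ge. exists (meet u1 u2), (join v1 v2).
    repeat split; auto using open_meet, open_join.
    + rewrite neg_join. apply le_meet.
      * eapply le_trans; [| exact Hle1]. solve_meet.
      * eapply le_trans; [| exact Hle2]. solve_meet.
    + rewrite phi_meet, P1_join, neg_join; auto. apply le_antisym; solve_meet.
Qed.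

Lemma prox_ext_bot : prox_ext bot = bot.
Proof.
  apply le_bot_eq, Sup_le. intros y [u [v [Hu [Hv [Hle ->]]]]].
  apply (proj1 (le_iff_meet_neg _ _)), P1_monotone; auto.
  apply (proj2 (le_iff_meet_neg _ _)); exact Hle.
Qed.

(* The inductive step of (P3): by [meet_neg_le_join] each generating piece on the left splits
   into two open differences below [c]. *)
Lemma prox_ext_diff_join u1 v1 c : is_open u1 -> is_open v1 ->
  le (prox_ext (join (meet u1 (neg v1)) c))
     (join (prox_ext (meet u1 (neg v1))) (prox_ext c)).
Proof.
  intros Hu1 Hv1. rewrite prox_ext_diff by auto.
  apply Sup_le. intros y [u [v [Hu [Hv [[L1 L2]%meet_neg_le_join ->]]]]].
  apply meet_neg_le_join. split.
  - rewrite <- phi_meet, <- prox_ext_diff by auto using open_meet.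
    apply prox_ext_monotone; auto.
  - rewrite <- P1_join, <- prox_ext_diff by auto using open_join.
    apply prox_ext_monotone; auto.
Qed.

Lemma prox_ext_P3 : P3 prox_ext.
Proof.
  intros l. induction l as [| x l IH]; intros Hl.
  - rewrite Sup_In_nil, Sup_img_nil. apply prox_ext_bot.
  - rewrite Sup_In_cons, Sup_img_cons, <- IH by (intros; apply Hl; right; auto).
    apply le_antisym.
    + destruct (proj1 (LC_iff_open_diff x) (Hl x (or_introl eq_refl)))
        as [u1 [v1 [Hu1 [Hv1 ->]]]].
      apply prox_ext_diff_join; auto.
    + apply join_le; apply prox_ext_monotone; auto using join_ge_l, join_ge_r.
Qed.

Lemma prox_ext_P4 : P4 prox_ext.
Proof.
  intros a. apply le_antisym.
  - apply Sup_le. intros y [u [v [Hu [Hv [Hle ->]]]]].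
    rewrite <- prox_ext_diff by auto. apply Sup_img_ge. split; auto.
    apply LC_iff_open_diff. exists u, v; auto.
  - apply Sup_img_le. intros s [_ Hs]. apply prox_ext_monotone; auto.
Qed.

Lemma prox_ext_proximity : proximity prox_ext.
Proof.
  split; [| split; [| split]]; auto using prox_ext_P1, prox_ext_P2, prox_ext_P3, prox_ext_P4.
Qed.

End Extension.

Section FrameLemmas.
Context {L : Frame}.
Implicit Types a b c d u x y : L.

Lemma fmeet_le_l a b : fle (fmeet a b) a.
Proof. exact (proj1 (proj1 (fmeet_glb _ _ a b) (fle_refl _ _))). Qed.
Lemma fmeet_le_r a b : fle (fmeet a b) b.
Proof. exact (proj2 (proj1 (fmeet_glb _ _ a b) (fle_refl _ _))). Qed.
Lemma fle_meet x a b : fle x a -> fle x b -> fle x (fmeet a b).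
Proof. intros; apply fmeet_glb; auto. Qed.
Lemma fSup_ge (S : L -> Prop) s : S s -> fle s (fSup S).
Proof. exact (proj1 (fSup_lub _ S _) (fle_refl _ _) s). Qed.
Lemma fSup_le (S : L -> Prop) x : (forall s, S s -> fle s x) -> fle (fSup S) x.
Proof. apply fSup_lub. Qed.
Lemma fSup_ext (S T : L -> Prop) : (forall x, S x <-> T x) -> fSup S = fSup T.
Proof.
  intros H. apply fle_antisym; apply fSup_le; intros s Hs; apply fSup_ge, H; auto.
Qed.
Lemma fmeet_le_compat a b c d : fle a c -> fle b d -> fle (fmeet a b) (fmeet c d).
Proof.
  intros; apply fle_meet;
    [eapply fle_trans; [apply fmeet_le_l |] | eapply fle_trans; [apply fmeet_le_r |]]; auto.
Qed.

Definition fjoin a b : L := fSup (fun x => x = a \/ x = b).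
Definition fbot : L := fSup (fun _ => False).

Lemma fjoin_ge_l a b : fle a (fjoin a b). Proof. apply fSup_ge; auto. Qed.
Lemma fjoin_ge_r a b : fle b (fjoin a b). Proof. apply fSup_ge; auto. Qed.
Lemma fjoin_le a b x : fle a x -> fle b x -> fle (fjoin a b) x.
Proof. intros; apply fSup_le; intros s [-> | ->]; auto. Qed.
Lemma fbot_min a : fle fbot a. Proof. apply fSup_le; intros s []. Qed.

Lemma fle_of_cover c d (T : L -> Prop) :
  fle c (fSup T) -> (forall t, T t -> fle (fmeet c t) d) -> fle c d.
Proof.
  intros H1 H2.
  replace c with (fmeet c (fSup T))
    by (apply fle_antisym; auto using fmeet_le_l, fle_meet, fle_refl).
  rewrite frame_distr. apply fSup_le. intros y [t [Ht ->]]; auto.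
Qed.
Lemma fle_of_cover2 c a b d :
  fle c (fjoin a b) -> fle (fmeet c a) d -> fle (fmeet c b) d -> fle c d.
Proof. intros H1 H2 H3. apply (fle_of_cover c d _ H1). intros t [-> | ->]; auto. Qed.

End FrameLemmas.

Ltac fmeet_le := first [ apply fle_refl
                       | eapply fle_trans; [apply fmeet_le_l |]; fmeet_le
                       | eapply fle_trans; [apply fmeet_le_r |]; fmeet_le ].
Ltac solve_fmeet := repeat apply fle_meet; fmeet_le.

Lemma fle_of_cover3 {L : Frame} (c d x u y : L) :
  fle c (fjoin x d) -> fle x (fjoin u y) -> fle (fmeet c u) d -> fle (fmeet c y) d -> fle c d.
Proof.
  intros H1 H2 H3 H4. apply (fle_of_cover2 c x d d H1); [| apply fmeet_le_r].
  apply (fle_of_cover2 _ u y d).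
  - eapply fle_trans; [apply fmeet_le_r | exact H2].
  - eapply fle_trans; [| exact H3]. solve_fmeet.
  - eapply fle_trans; [| exact H4]. solve_fmeet.
Qed.

Lemma frame_morphism_id (L : Frame) : frame_morphism (fun a : L => a).
Proof.
  split; [reflexivity | split; [reflexivity |]]. intros S. apply fSup_ext. intros x; split.
  - intros Hx; exists x; auto.
  - intros [y [Hy ->]]; auto.
Qed.
Lemma frame_morphism_comp {L1 L2 L3 : Frame} (f : L1 -> L2) (g : L2 -> L3) :
  frame_morphism f -> frame_morphism g -> frame_morphism (fun a => g (f a)).
Proof.
  intros [Ft [Fm FS]] [Gt [Gm GS]]. split; [| split].
  - rewrite Ft; auto.
  - intros a b. rewrite Fm, Gm; auto.
  - intros S. rewrite FS, GS. apply fSup_ext. intros x; split.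
    + intros [y [[z [Hz ->]] ->]]. exists z; auto.
    + intros [z [Hz ->]]. exists (f z). split; [exists z |]; auto.
Qed.

Section FrameOfOpens.
Context (M : MTAlg).

Definition open_elt : Type := { a : M | is_open a }.

Lemma open_elt_eq (a b : open_elt) : proj1_sig a = proj1_sig b -> a = b.
Proof. destruct a, b; simpl; intros ->. f_equal. apply proof_irrelevance. Qed.

Definition open_sups (S : open_elt -> Prop) : M -> Prop :=
  fun x => exists s, S s /\ x = proj1_sig s.

Lemma open_Sup_sups (S : open_elt -> Prop) : is_open (Sup (open_sups S)).
Proof. apply open_Sup. intros x [s [_ ->]]. apply proj2_sig. Qed.

Definition Opens : Frame.
Proof.
  refine (@Build_Frame open_elt (fun a b => le (proj1_sig a) (proj1_sig b)) _ _ _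
    (exist _ top open_top)
    (fun a b => exist _ (meet (proj1_sig a) (proj1_sig b))
                  (open_meet _ _ (proj2_sig a) (proj2_sig b)))
    (fun S => exist _ (Sup (open_sups S)) (open_Sup_sups S))
    _ _ _ _).
  - intros; apply le_refl.
  - intros a b H1 H2. apply open_elt_eq, le_antisym; auto.
  - intros a b c; apply le_trans.
  - intros a; apply top_max.
  - intros x a b; apply meet_glb.
  - intros S x. simpl. rewrite Sup_lub. split.
    + intros H s Hs. apply H. exists s; auto.
    + intros H y [s [Hs ->]]. auto.
  - intros a S. apply open_elt_eq. simpl. rewrite meet_Sup_distr. apply Sup_ext. intros y. split.
    + intros [x [[s [Hs ->]] ->]]. eexists.
      split; [exists s; split; [exact Hs | reflexivity] | reflexivity].
    + intros [t [[s [Hs ->]] ->]]. exists (proj1_sig s). split; [exists s |]; auto.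
Defined.

End FrameOfOpens.

Section OpensMap.
Context {M N : MTAlg} (f : M -> N).

(* Raw arrows need not preserve opens, hence the [box]; it is inert on proximity morphisms. *)
Definition opens_map (a : Opens M) : Opens N := exist _ (box (f (proj1_sig a))) (open_box _).

Hypothesis Hf : proximity f.

Lemma opens_map_val (a : Opens M) : proj1_sig (opens_map a) = f (proj1_sig a).
Proof. apply (proj1 (proj1 Hf)), proj2_sig. Qed.

Lemma opens_map_frame_morphism : frame_morphism opens_map.
Proof.
  destruct Hf as [[_ [Ht [_ HS]]] [H2 _]].
  split; [| split].
  - apply open_elt_eq. rewrite opens_map_val. exact Ht.
  - intros a b. apply open_elt_eq.
    change (proj1_sig (opens_map (fmeet a b))
            = meet (proj1_sig (opens_map a)) (proj1_sig (opens_map b))).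
    rewrite !opens_map_val. apply H2.
  - intros S. apply open_elt_eq. rewrite opens_map_val.
    change (f (Sup (open_sups M S)) = Sup (open_sups N (img opens_map S))).
    rewrite HS by (intros s [t [_ ->]]; apply proj2_sig).
    apply Sup_ext. intros y; split.
    + intros [x [[s [Hs ->]] ->]]. exists (opens_map s). split; [exists s; auto |].
      symmetry; apply opens_map_val.
    + intros [t [[s [Hs ->]] ->]]. exists (proj1_sig s). split; [exists s; auto |].
      apply opens_map_val.
Qed.

End OpensMap.

Lemma opens_map_ext {M N : MTAlg} (f g : M -> N) :
  (forall a, f a = g a) -> opens_map f = opens_map g.
Proof.
  intros E. apply functional_extensionality. intros x.
  apply open_elt_eq. simpl. rewrite E. reflexivity.
Qed.

Lemma opens_map_prox_id (M : MTAlg) (a : Opens M) : opens_map (prox_id M) a = a.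
Proof. apply open_elt_eq. simpl. rewrite prox_id_open; apply proj2_sig. Qed.

Lemma opens_map_prox_comp {M1 M2 M3 : MTAlg} (g : M2 -> M3) (f : M1 -> M2) a :
  proximity f -> proximity g -> opens_map (prox_comp g f) a = opens_map g (opens_map f a).
Proof.
  intros Hf Hg. apply open_elt_eq. simpl.
  rewrite prox_comp_open by (auto; apply proj2_sig).
  rewrite (proj1 (proj1 Hf)) by apply proj2_sig. reflexivity.
Qed.

(* Two points are orthogonal when all their common lower bounds are zero; the sets equal to
   their double orthogonal form a complete Boolean algebra (for an empty zero set, the
   regular-open algebra of the preorder). *)
Record ZPreorder : Type := {
  zpt : Type;
  zle : zpt -> zpt -> Prop;
  zero : zpt -> Prop;
  zle_refl : forall p, zle p p;
  zle_trans : forall p q r, zle p q -> zle q r -> zle p r;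
  zero_down : forall p q, zle q p -> zero p -> zero q
}.
Arguments zle {_}. Arguments zero {_}.

Section RegularAlgebra.
Context {P : ZPreorder}.
Implicit Types (p q r : zpt P) (X Y : zpt P -> Prop).

Definition orth p q : Prop := forall r, zle r p -> zle r q -> zero r.
Definition orth_set X p : Prop := forall q, X q -> orth p q.
Definition regular X : Prop := forall p, orth_set (orth_set X) p -> X p.

Lemma orth_sym p q : orth p q -> orth q p.
Proof. intros H r H1 H2; auto. Qed.
Lemma orth_zero p q : zero p -> orth p q.
Proof. intros H r H1 _. exact (zero_down _ _ _ H1 H). Qed.
Lemma orth_self p : orth p p -> zero p.
Proof. intros H. apply H; apply zle_refl. Qed.

Lemma orth_set_orth_set X p : X p -> orth_set (orth_set X) p.
Proof. intros Hp q Hq. apply orth_sym, Hq, Hp. Qed.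
Lemma orth_set_anti X Y : (forall p, X p -> Y p) -> forall p, orth_set Y p -> orth_set X p.
Proof. intros H p Hp q Hq. apply Hp; auto. Qed.
Lemma orth_set2_monotone X Y :
  (forall p, X p -> Y p) -> forall p, orth_set (orth_set X) p -> orth_set (orth_set Y) p.
Proof. intros H. apply orth_set_anti, orth_set_anti, H. Qed.
Lemma regular_orth_set X : regular (orth_set X).
Proof.
  intros p Hp. apply (orth_set_anti X (orth_set (orth_set X))); auto using orth_set_orth_set.
Qed.
Lemma orth_set_down X p q : zle q p -> orth_set X p -> orth_set X q.
Proof.
  intros Hqp Hp s Hs r H1 H2. apply (Hp s Hs); [exact (zle_trans _ _ _ _ H1 Hqp) | exact H2].
Qed.
Lemma regular_down X : regular X -> forall p q, zle q p -> X p -> X q.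
Proof. intros HX p q H Hp. apply HX. eapply orth_set_down; eauto using orth_set_orth_set. Qed.
Lemma regular_zero X : regular X -> forall p, zero p -> X p.
Proof. intros HX p Hp. apply HX. intros q _. apply orth_zero; auto. Qed.
Lemma regular_zero_set : regular (@zero P).
Proof. intros p Hp. apply orth_self, Hp. intros q Hq. apply orth_sym, orth_zero; auto. Qed.

Definition RegSet : Type := { X : zpt P -> Prop | regular X }.

Lemma RegSet_eq (X Y : RegSet) : (forall p, proj1_sig X p <-> proj1_sig Y p) -> X = Y.
Proof.
  destruct X as [x hx], Y as [y hy]; simpl; intros H.
  assert (x = y)
    by (apply functional_extensionality; intros; apply propositional_extensionality; auto).
  subst. f_equal. apply proof_irrelevance.
Qed.

Definition reg_le (X Y : RegSet) : Prop := forall p, proj1_sig X p -> proj1_sig Y p.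
Definition reg_closure X : RegSet := exist _ (orth_set (orth_set X)) (regular_orth_set _).

Lemma regular_inter (X Y : RegSet) : regular (fun p => proj1_sig X p /\ proj1_sig Y p).
Proof.
  destruct X as [x hx], Y as [y hy]; simpl. intros p Hp. split.
  - apply hx. revert p Hp. apply orth_set2_monotone. tauto.
  - apply hy. revert p Hp. apply orth_set2_monotone. tauto.
Qed.

Definition reg_top : RegSet := exist regular (fun _ => True) (fun _ _ => I).
Definition reg_bot : RegSet := exist _ zero regular_zero_set.
Definition reg_neg (A : RegSet) : RegSet := exist _ (orth_set (proj1_sig A)) (regular_orth_set _).
Definition reg_meet (X Y : RegSet) : RegSet := exist _ _ (regular_inter X Y).
Definition reg_join (X Y : RegSet) : RegSet :=
  reg_closure (fun p => proj1_sig X p \/ proj1_sig Y p).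
Definition reg_Sup (S : RegSet -> Prop) : RegSet :=
  reg_closure (fun p => exists A : RegSet, S A /\ proj1_sig A p).

Lemma reg_closure_le X (Y : RegSet) : reg_le (reg_closure X) Y <-> (forall p, X p -> proj1_sig Y p).
Proof.
  destruct Y as [y hy]; unfold reg_le; simpl. split.
  - intros H p Hp. apply H, orth_set_orth_set, Hp.
  - intros H p Hp. apply hy. revert p Hp. apply orth_set2_monotone. auto.
Qed.

Lemma reg_meet_join_distr (a b c : RegSet) :
  reg_meet a (reg_join b c) = reg_join (reg_meet a b) (reg_meet a c).
Proof.
  apply RegSet_eq. destruct a as [x hx], b as [y hy], c as [w hw]; simpl. intros p. split.
  - intros [Hx Hp] q Hq r H1 H2. apply NNPP. intros Hr.
    assert (Hrx : x r) by exact (regular_down x hx p r H1 Hx).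
    assert (Hnot : ~ orth_set (fun p => y p \/ w p) r).
    { intros Hn. apply Hr, orth_self. exact (orth_set_down _ p r H1 Hp r Hn). }
    apply Hnot. intros s Hs t Ht1 Ht2. apply NNPP. intros Ht.
    assert (Htx : x t) by exact (regular_down x hx r t Ht1 Hrx).
    apply Ht, (Hq t); [| exact (zle_trans _ _ _ _ Ht1 H2) | apply zle_refl].
    destruct Hs as [Hs | Hs]; [left | right]; split; auto;
      [exact (regular_down y hy s t Ht2 Hs) | exact (regular_down w hw s t Ht2 Hs)].
  - intros Hp. split.
    + apply hx. revert p Hp. apply orth_set2_monotone. tauto.
    + revert p Hp. apply orth_set2_monotone. tauto.
Qed.

Definition RegularAlgebra : CBA.
Proof.
  refine (@Build_CBA RegSet reg_le _ _ _ reg_top reg_bot reg_meet reg_join reg_neg reg_Sup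
    _ _ _ _ _ reg_meet_join_distr _ _).
  - intros a p; auto.
  - intros a b H1 H2. apply RegSet_eq. split; auto.
  - intros a b c H1 H2 p Hp; auto.
  - intros a p _. exact I.
  - intros [x hx] p Hp. apply regular_zero; auto.
  - intros x a b. unfold reg_le; simpl. split.
    + intros H; split; intros p Hp; apply H; auto.
    + intros [H1 H2] p Hp; split; auto.
  - intros a b x. unfold reg_join. rewrite reg_closure_le. split.
    + intros H; split; intros p Hp; apply H; auto.
    + intros [H1 H2] p [Hp | Hp]; auto.
  - intros S x. unfold reg_Sup. rewrite reg_closure_le. split.
    + intros H s Hs p Hp. apply H. eauto.
    + intros H p [X [HX Hp]]. apply (H X HX); auto.
  - intros [x hx]. apply RegSet_eq. simpl. intros p; split.
    + intros [H1 H2]. apply orth_self, H2, H1.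
    + intros Hp. split; apply regular_zero; auto using regular_orth_set.
  - intros [x hx]. apply RegSet_eq. simpl. intros p; split; [intros; exact I |].
    intros _ q Hq. apply orth_sym, orth_zero, orth_self.
    apply (orth_set_anti (orth_set x) _ (fun p h => or_intror h) q Hq).
    exact (orth_set_anti x _ (fun p h => or_introl h) q Hq).
Defined.

End RegularAlgebra.
Arguments RegularAlgebra : clear implicits.

Record FrameEmbedding (L : Frame) : Type := {
  emb_cba : CBA;
  emb : L -> emb_cba;
  emb_top : emb ftop = top;
  emb_meet : forall u v, emb (fmeet u v) = meet (emb u) (emb v);
  emb_Sup : forall S, emb (fSup S) = Sup (img emb S);
  emb_reflect : forall u v, le (emb u) (emb v) -> fle u v
}.
Arguments emb_cba {L}. Arguments emb {L}.

Section EmbeddingInterior.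
Context {L : Frame} (E : FrameEmbedding L).

Definition emb_radj (a : emb_cba E) : L := fSup (fun u => le (emb E u) a).

Lemma emb_monotone u v : fle u v -> le (emb E u) (emb E v).
Proof.
  intros H. replace u with (fmeet u v)
    by (apply fle_antisym; auto using fmeet_le_l, fle_meet, fle_refl).
  rewrite emb_meet. apply meet_le_r.
Qed.
Lemma emb_radj_le a : le (emb E (emb_radj a)) a.
Proof. unfold emb_radj. rewrite emb_Sup. apply Sup_img_le. auto. Qed.
Lemma le_emb_radj u a : le (emb E u) a -> fle u (emb_radj a).
Proof. intros H. apply fSup_ge; auto. Qed.
Lemma emb_radj_emb u : emb_radj (emb E u) = u.
Proof.
  apply fle_antisym; [apply fSup_le; intros; apply (emb_reflect _ E); auto |].
  apply le_emb_radj, le_refl.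
Qed.
Lemma emb_radj_monotone a b : le a b -> fle (emb_radj a) (emb_radj b).
Proof. intros H. apply le_emb_radj. eapply le_trans; [apply emb_radj_le | exact H]. Qed.

Lemma emb_radj_top : emb_radj top = ftop.
Proof. rewrite <- (emb_top _ E). apply emb_radj_emb. Qed.

Definition EmbMT : MTAlg.
Proof.
  refine (@Build_MTAlg (emb_cba E) (fun a => emb E (emb_radj a)) _ _ _ _).
  - rewrite emb_radj_top. apply emb_top.
  - intros a b. apply le_antisym.
    + apply le_meet; apply emb_monotone, emb_radj_monotone; [apply meet_le_l | apply meet_le_r].
    + rewrite <- emb_meet. apply emb_monotone, le_emb_radj.
      rewrite emb_meet. apply meet_le_compat; apply emb_radj_le.
  - intros a. apply emb_radj_le.
  - intros a. rewrite emb_radj_emb. apply le_refl.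
Defined.

Lemma EmbMT_open_emb u : @is_open EmbMT (emb E u).
Proof. unfold is_open; simpl. rewrite emb_radj_emb. reflexivity. Qed.
Lemma EmbMT_open_inv (a : EmbMT) : is_open a -> emb E (emb_radj a) = a.
Proof. auto. Qed.

Lemma emb_radj_meet (a b : EmbMT) : is_open a -> is_open b ->
  emb_radj (meet a b) = fmeet (emb_radj a) (emb_radj b).
Proof.
  intros Ha Hb. rewrite <- (EmbMT_open_inv a Ha) at 1. rewrite <- (EmbMT_open_inv b Hb) at 1.
  simpl. rewrite <- emb_meet. apply emb_radj_emb.
Qed.
Lemma emb_radj_Sup (S : EmbMT -> Prop) : (forall s, S s -> is_open s) ->
  emb_radj (Sup S) = fSup (img emb_radj S).
Proof.
  intros HS. replace (Sup S) with (emb E (fSup (img emb_radj S))); [apply emb_radj_emb |].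
  rewrite emb_Sup. apply Sup_ext. intros y; split.
  - intros [u [[s [Hs ->]] ->]]. rewrite EmbMT_open_inv; auto.
  - intros Hy. exists (emb_radj y). split; [exists y; auto |]. symmetry; apply EmbMT_open_inv; auto.
Qed.

End EmbeddingInterior.

Section Booleanization.
Context {L : Frame}.
Implicit Types (u v a b : L) (p q r : L * L).

(* The pair [(a, b)] stands for "a and not b"; order and zero are what this reading
   forces in any Boolean extension of [L] (compare [meet_neg_le_meet_neg]). *)
Definition diff_le p q : Prop :=
  fle (fst p) (fjoin (fst q) (snd p)) /\ fle (fmeet (fst p) (snd q)) (snd p).
Definition diff_zero p : Prop := fle (fst p) (snd p).

Lemma diff_le_refl p : diff_le p p.
Proof. split; [apply fjoin_ge_l | apply fmeet_le_r]. Qed.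

Lemma diff_le_trans p q r : diff_le p q -> diff_le q r -> diff_le p r.
Proof.
  destruct p as [a b], q as [u v], r as [x y]; unfold diff_le; simpl.
  intros [H1 H2] [H3 H4]. split.
  - apply (fle_of_cover2 a u b _ H1).
    + apply (fle_of_cover2 _ x v).
      * eapply fle_trans; [apply fmeet_le_r | exact H3].
      * eapply fle_trans; [apply fmeet_le_r | apply fjoin_ge_l].
      * eapply fle_trans; [| apply fjoin_ge_r]. eapply fle_trans; [| exact H2]. solve_fmeet.
    + eapply fle_trans; [apply fmeet_le_r | apply fjoin_ge_r].
  - apply (fle_of_cover2 _ u b).
    + eapply fle_trans; [apply fmeet_le_l | exact H1].
    + eapply fle_trans; [| exact H2]. apply fle_meet; [solve_fmeet |].
      eapply fle_trans; [| exact H4]. solve_fmeet.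
    + apply fmeet_le_r.
Qed.

Lemma diff_zero_down p q : diff_le q p -> diff_zero p -> diff_zero q.
Proof.
  destruct p as [u v], q as [a b]; unfold diff_le, diff_zero; simpl. intros [H1 H2] H3.
  apply (fle_of_cover2 a u b _ H1); [| apply fmeet_le_r].
  eapply fle_trans; [| exact H2]. apply fmeet_le_compat; [apply fle_refl | exact H3].
Qed.

Definition DiffPreorder : ZPreorder :=
  {| zpt := L * L; zle := diff_le; zero := diff_zero;
     zle_refl := diff_le_refl; zle_trans := diff_le_trans; zero_down := diff_zero_down |}.

Definition below u p : Prop := fle (fst p) (fjoin u (snd p)).

Lemma below_monotone u v : fle u v -> forall p, below u p -> below v p.
Proof.
  intros H [a b] Hp. eapply fle_trans; [exact Hp |].
  apply fjoin_le; [eapply fle_trans; [exact H | apply fjoin_ge_l] | apply fjoin_ge_r].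
Qed.

Lemma below_self u : below u (u, fbot).
Proof. apply fjoin_ge_l. Qed.

Lemma below_regular u : @regular DiffPreorder (below u).
Proof.
  intros [a b] Hp. unfold below; simpl.
  assert (Hq : @orth_set DiffPreorder (below u) (a, fjoin u b)).
  { intros [x y] Hxy [c d] [Hr1 Hr2] [Hr3 Hr4]. simpl in *.
    apply (fle_of_cover3 c d x u y Hr3 Hxy); [| exact Hr4].
    eapply fle_trans; [| exact Hr2]. apply fmeet_le_compat; [apply fle_refl | apply fjoin_ge_l]. }
  apply (Hp _ Hq (a, fjoin u b)); [| apply diff_le_refl].
  split; simpl; [apply fjoin_ge_l | eapply fle_trans; [apply fmeet_le_r | apply fjoin_ge_r]].
Qed.

Definition bool_emb u : RegularAlgebra DiffPreorder := exist _ (below u) (below_regular u).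

Lemma bool_emb_top : bool_emb ftop = top.
Proof.
  apply RegSet_eq. intros [a b]; simpl; split; [intros; exact I |].
  intros _. eapply fle_trans; [apply ftop_max | apply fjoin_ge_l].
Qed.

Lemma bool_emb_meet u v : bool_emb (fmeet u v) = meet (bool_emb u) (bool_emb v).
Proof.
  apply RegSet_eq. intros p; simpl. split.
  - intros H; split; revert H; apply below_monotone; [apply fmeet_le_l | apply fmeet_le_r].
  - destruct p as [a b]; unfold below; simpl. intros [H1 H2].
    apply (fle_of_cover2 a u b _ H1); [| eapply fle_trans; [apply fmeet_le_r | apply fjoin_ge_r]].
    apply (fle_of_cover2 _ v b).
    + eapply fle_trans; [apply fmeet_le_l | exact H2].
    + eapply fle_trans; [| apply fjoin_ge_l]. solve_fmeet.
    + eapply fle_trans; [apply fmeet_le_r | apply fjoin_ge_r].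
Qed.

(* This is where the frame distributive law enters, through [fle_of_cover]. *)
Lemma below_Sup_orth (S : L -> Prop) p q :
  below (fSup S) p ->
  @orth_set DiffPreorder (fun r => exists A, img bool_emb S A /\ proj1_sig A r) q ->
  @orth DiffPreorder p q.
Proof.
  destruct p as [a b]. intros Hp Hq [c d] [Hr1 Hr2] Hr3. simpl in *. unfold diff_zero; simpl.
  apply (fle_of_cover2 c a d _ Hr1); [| apply fmeet_le_r].
  apply (fle_of_cover2 _ (fSup S) b); [eapply fle_trans; [apply fmeet_le_r | exact Hp] | |].
  - apply (fle_of_cover _ _ S (fmeet_le_r _ _)). intros t Ht.
    assert (Hct : diff_le (fmeet c t, d) (c, d)).
    { split; simpl; [eapply fle_trans; [apply fmeet_le_l | apply fjoin_ge_l] | apply fmeet_le_r]. }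
    eapply fle_trans;
      [| refine (Hq (fmeet c t, d) _ _ (diff_le_trans _ _ _ Hct Hr3) (diff_le_refl _))].
    + solve_fmeet.
    + exists (bool_emb t). split; [exists t; auto |].
      simpl. eapply fle_trans; [apply fmeet_le_r | apply fjoin_ge_l].
  - eapply fle_trans; [| exact Hr2]. solve_fmeet.
Qed.

Lemma bool_emb_Sup (S : L -> Prop) : bool_emb (fSup S) = Sup (img bool_emb S).
Proof.
  apply RegSet_eq. intros p; simpl. split.
  - intros Hp q Hq. apply (below_Sup_orth S); auto.
  - intros Hp. apply (below_regular (fSup S)). revert p Hp. apply orth_set2_monotone.
    intros q [A [[s [Hs ->]] Hq]]. revert Hq. apply below_monotone, fSup_ge, Hs.
Qed.

Lemma bool_emb_reflect u v : le (bool_emb u) (bool_emb v) -> fle u v.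
Proof.
  intros H. specialize (H _ (below_self u)). simpl in H.
  apply (fle_of_cover2 u v fbot _ H); [apply fmeet_le_r |].
  eapply fle_trans; [apply fmeet_le_r | apply fbot_min].
Qed.

Definition booleanization : FrameEmbedding L :=
  {| emb := bool_emb; emb_top := bool_emb_top; emb_meet := bool_emb_meet;
     emb_Sup := bool_emb_Sup; emb_reflect := bool_emb_reflect |}.

Lemma bool_diff_mem a b : proj1_sig (meet (bool_emb a) (neg (bool_emb b))) (a, b).
Proof.
  split; [apply fjoin_ge_l |].
  intros [x y] Hxy [c d] [H1 H2] [H3 H4]. exact (fle_of_cover3 c d x b y H3 Hxy H2 H4).
Qed.

Lemma bool_diff_mem_le a b p :
  proj1_sig (meet (bool_emb a) (neg (bool_emb b))) p -> diff_le p (a, b).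
Proof.
  destruct p as [x y]. intros [Ha Hb]. split; [exact Ha |]. simpl.
  apply (Hb _ (below_self b) (fmeet x b, y)).
  - split; simpl; [eapply fle_trans; [apply fmeet_le_l | apply fjoin_ge_l] | solve_fmeet].
  - split; simpl; [eapply fle_trans; [apply fmeet_le_r | apply fjoin_ge_l]
                  | eapply fle_trans; [apply fmeet_le_r | apply fbot_min]].
Qed.

End Booleanization.
Arguments booleanization : clear implicits.

Definition BoolMT (L : Frame) : MTAlg := EmbMT (booleanization L).

Section BoolInterior.
Context {L : Frame}.

Definition bool_radj : BoolMT L -> L := emb_radj (booleanization L).

Lemma bool_emb_open (u : L) : @is_open (BoolMT L) (bool_emb u).
Proof. exact (EmbMT_open_emb _ u). Qed.
Lemma bool_emb_radj (a : BoolMT L) : is_open a -> bool_emb (bool_radj a) = a.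
Proof. exact (EmbMT_open_inv _ a). Qed.
Lemma bool_radj_emb (u : L) : bool_radj (bool_emb u) = u.
Proof. exact (emb_radj_emb _ u). Qed.
Lemma bool_radj_top : bool_radj (@top (BoolMT L)) = ftop.
Proof. exact (emb_radj_top _). Qed.
Lemma bool_radj_meet (a b : BoolMT L) : is_open a -> is_open b ->
  bool_radj (meet a b) = fmeet (bool_radj a) (bool_radj b).
Proof. exact (emb_radj_meet _ a b). Qed.
Lemma bool_radj_Sup (S : BoolMT L -> Prop) : (forall s, S s -> is_open s) ->
  bool_radj (Sup S) = fSup (img bool_radj S).
Proof. exact (emb_radj_Sup _ S). Qed.

End BoolInterior.

Lemma BoolMT_TD (L : Frame) : is_TD (BoolMT L).
Proof.
  intros D. exists (fun x => is_LC x /\ le x D). split; [tauto |].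
  apply le_antisym; [| apply Sup_le; tauto].
  intros [a b] Hab. apply orth_set_orth_set.
  exists (meet (bool_emb a) (neg (bool_emb b)) : BoolMT L). split; [split |].
  - apply LC_iff_open_diff. exists (bool_emb a : BoolMT L), (bool_emb b : BoolMT L).
    repeat split; apply bool_emb_open.
  - intros p Hp. apply (regular_down _ (proj2_sig D) (a, b)); [apply bool_diff_mem_le |]; auto.
  - apply bool_diff_mem.
Qed.

Section BoolMap.
Context {L L' : Frame} (h : L -> L').

Definition bool_map (a : BoolMT L) : BoolMT L' := bool_emb (h (bool_radj a)).

Lemma bool_map_P1 : frame_morphism h -> P1 bool_map.
Proof.
  intros [Ht [Hm HS]]. split; [| split; [| split]].
  - intros a _. apply bool_emb_open.
  - unfold bool_map. rewrite bool_radj_top, Ht. apply bool_emb_top.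
  - intros a b Ha Hb. unfold bool_map. rewrite bool_radj_meet, Hm by auto. apply bool_emb_meet.
  - intros S HS'. unfold bool_map. rewrite bool_radj_Sup, HS, bool_emb_Sup by auto.
    apply Sup_ext. intros y; split.
    + intros [u [[v [[s [Hs ->]] ->]] ->]]. exists s; auto.
    + intros [s [Hs ->]]. exists (h (bool_radj s)). split; [| reflexivity].
      exists (bool_radj s). split; [exists s |]; auto.
Qed.

End BoolMap.

Definition bool_mor {L L' : Frame} (h : L -> L') : BoolMT L -> BoolMT L' := prox_ext (bool_map h).

Section BoolMor.
Context {L L' : Frame} (h : L -> L') (Hh : frame_morphism h).

Lemma bool_mor_proximity : proximity (bool_mor h).
Proof. apply prox_ext_proximity, bool_map_P1, Hh. Qed.

Lemma bool_mor_open (a : BoolMT L) : is_open a -> bool_mor h a = bool_emb (h (bool_radj a)).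
Proof. exact (prox_ext_open _ (bool_map_P1 h Hh) a). Qed.

End BoolMor.

Lemma bool_mor_id (L : Frame) (a : BoolMT L) : bool_mor (fun x : L => x) a = prox_id (BoolMT L) a.
Proof.
  apply proximity_eq_prox_id; [apply bool_mor_proximity, frame_morphism_id |].
  intros u Hu. rewrite bool_mor_open by auto using frame_morphism_id. apply bool_emb_radj, Hu.
Qed.

Lemma bool_mor_comp {L1 L2 L3 : Frame} (f : L1 -> L2) (g : L2 -> L3) (a : BoolMT L1) :
  frame_morphism f -> frame_morphism g ->
  bool_mor (fun x => g (f x)) a = prox_comp (bool_mor g) (bool_mor f) a.
Proof.
  intros Hf Hg. apply proximity_eq_prox_comp; auto using bool_mor_proximity, frame_morphism_comp.
  intros u Hu. rewrite (bool_mor_open f) by auto.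
  rewrite !bool_mor_open, bool_radj_emb; auto using bool_emb_open, frame_morphism_comp.
Qed.

Definition bool_functor : Functor Frm TDMTP.
Proof.
  refine (@Build_Functor Frm TDMTP (fun L => exist _ (BoolMT L) (BoolMT_TD L))
            (fun L L' h => bool_mor h) _ _ _ _).
  - intros L L' h Hh. apply bool_mor_proximity, Hh.
  - intros L L' h k _ _ E a. replace k with h by (apply functional_extensionality; exact E).
    reflexivity.
  - intros L a. apply bool_mor_id.
  - intros L1 L2 L3 f g Hf Hg a. exact (bool_mor_comp f g a Hf Hg).
Defined.

Definition opens_functor_TD : Functor TDMTP Frm.
Proof.
  refine (@Build_Functor TDMTP Frm (fun M => Opens (proj1_sig M)) (fun M N f => opens_map f)
            _ _ _ _).
  - intros M N f Hf. apply opens_map_frame_morphism, Hf.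
  - intros M N f g _ _ E a. rewrite (opens_map_ext f g E). reflexivity.
  - intros M a. apply opens_map_prox_id.
  - intros M1 M2 M3 f g Hf Hg a. apply opens_map_prox_comp; auto.
Defined.

Definition bool_of_opens_functor : Functor MTP TDMTP.
Proof.
  refine (@Build_Functor MTP TDMTP (fun M => exist _ (BoolMT (Opens M)) (BoolMT_TD (Opens M)))
            (fun M N f => bool_mor (opens_map f)) _ _ _ _).
  - intros M N f Hf. apply bool_mor_proximity, opens_map_frame_morphism, Hf.
  - intros M N f g _ _ E a. simpl. rewrite (opens_map_ext f g E). reflexivity.
  - intros M a. simpl.
    replace (opens_map (prox_id M)) with (fun x : Opens M => x) by
      (apply functional_extensionality; intros x; symmetry; apply opens_map_prox_id).
    apply bool_mor_id.
  - intros M1 M2 M3 f g Hf Hg a. simpl.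
    replace (opens_map (prox_comp g f)) with (fun x => opens_map g (opens_map f x)) by
      (apply functional_extensionality; intros x; symmetry; apply opens_map_prox_comp; auto).
    apply bool_mor_comp; apply opens_map_frame_morphism; auto.
Defined.

Section Counit.
Context (M : MTAlg).

Definition interior_pt (a : M) : Opens M := exist _ (box a) (open_box a).

Lemma interior_pt_open (w : Opens M) : interior_pt (proj1_sig w) = w.
Proof. apply open_elt_eq. exact (proj2_sig w). Qed.

Definition counit_on_opens (a : BoolMT (Opens M)) : M := proj1_sig (bool_radj a).
Definition counit_inv_on_opens (a : M) : BoolMT (Opens M) := bool_emb (interior_pt a).

Lemma counit_on_opens_P1 : P1 counit_on_opens.
Proof.
  split; [| split; [| split]].
  - intros a _. exact (proj2_sig _).
  - unfold counit_on_opens. rewrite bool_radj_top. reflexivity.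
  - intros a b Ha Hb. unfold counit_on_opens. rewrite bool_radj_meet by auto. reflexivity.
  - intros S HS. unfold counit_on_opens. rewrite bool_radj_Sup by auto.
    apply Sup_ext. intros y; split.
    + intros [w [[s [Hs ->]] ->]]. exists s; auto.
    + intros [s [Hs ->]]. exists (bool_radj s). split; [exists s |]; auto.
Qed.

Lemma interior_pt_Sup (S : M -> Prop) : (forall s, S s -> is_open s) ->
  interior_pt (Sup S) = fSup (img interior_pt S).
Proof.
  intros HS. apply open_elt_eq. simpl. rewrite (open_Sup S HS). apply Sup_ext. intros y; split.
  - intros Hy. exists (interior_pt y). split; [exists y; auto | simpl; symmetry; apply HS; auto].
  - intros [w [[s [Hs ->]] ->]]. simpl. rewrite (HS s Hs). auto.
Qed.

Lemma counit_inv_on_opens_P1 : P1 counit_inv_on_opens.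
Proof.
  split; [| split; [| split]].
  - intros a _. apply bool_emb_open.
  - unfold counit_inv_on_opens.
    replace (interior_pt top) with (@ftop (Opens M))
      by (apply open_elt_eq; symmetry; apply box_top).
    apply bool_emb_top.
  - intros a b Ha Hb. unfold counit_inv_on_opens.
    replace (interior_pt (meet a b)) with (@fmeet (Opens M) (interior_pt a) (interior_pt b))
      by (apply open_elt_eq; symmetry; apply box_meet).
    apply bool_emb_meet.
  - intros S HS. unfold counit_inv_on_opens. rewrite interior_pt_Sup, bool_emb_Sup by auto.
    apply Sup_ext. intros y; split.
    + intros [w [[s [Hs ->]] ->]]. exists s; auto.
    + intros [s [Hs ->]]. exists (interior_pt s). split; [exists s |]; auto.
Qed.

Definition counit : BoolMT (Opens M) -> M := prox_ext counit_on_opens.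
Definition counit_inv : M -> BoolMT (Opens M) := prox_ext counit_inv_on_opens.

Lemma counit_proximity : proximity counit.
Proof. apply prox_ext_proximity, counit_on_opens_P1. Qed.
Lemma counit_inv_proximity : proximity counit_inv.
Proof. apply prox_ext_proximity, counit_inv_on_opens_P1. Qed.

Lemma counit_open (a : BoolMT (Opens M)) : is_open a -> counit a = proj1_sig (bool_radj a).
Proof. exact (prox_ext_open _ counit_on_opens_P1 a). Qed.
Lemma counit_inv_open (u : M) : is_open u -> counit_inv u = bool_emb (interior_pt u).
Proof. exact (prox_ext_open _ counit_inv_on_opens_P1 u). Qed.

Lemma counit_is_iso : @is_iso MTP (BoolMT (Opens M)) M counit.
Proof.
  split; [apply counit_proximity |]. exists counit_inv.
  split; [apply counit_inv_proximity | split]; intros a;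
    apply prox_comp_eq_id; auto using counit_proximity, counit_inv_proximity; intros u Hu.
  - rewrite counit_open, counit_inv_open, interior_pt_open by (auto; apply proj2_sig).
    apply bool_emb_radj, Hu.
  - rewrite counit_inv_open, counit_open, bool_radj_emb by auto using bool_emb_open.
    exact Hu.
Qed.

End Counit.

Lemma counit_natural {M N : MTAlg} (f : M -> N) : proximity f ->
  forall a, prox_comp f (counit M) a = prox_comp (counit N) (bool_mor (opens_map f)) a.
Proof.
  intros Hf. apply prox_comp_ext;
    auto using counit_proximity, bool_mor_proximity, opens_map_frame_morphism.
  intros u Hu. rewrite counit_open, bool_mor_open, counit_open, bool_radj_emb, opens_map_val;
    auto using bool_emb_open, opens_map_frame_morphism.
Qed.

Section FrameUnit.
Context (L : Frame).

Definition frame_unit (a : Opens (BoolMT L)) : L := bool_radj (proj1_sig a).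
Definition frame_unit_inv (u : L) : Opens (BoolMT L) := exist _ (bool_emb u) (bool_emb_open u).

Lemma frame_unit_morphism : frame_morphism frame_unit.
Proof.
  split; [| split].
  - apply bool_radj_top.
  - intros a b. apply bool_radj_meet; apply proj2_sig.
  - intros S.
    change (bool_radj (Sup (open_sups (BoolMT L) S)) = fSup (img frame_unit S)).
    rewrite bool_radj_Sup by (intros s [t [_ ->]]; apply proj2_sig).
    apply fSup_ext. intros x; split.
    + intros [y [[s [Hs ->]] ->]]. exists s; auto.
    + intros [s [Hs ->]]. exists (proj1_sig s). split; [exists s |]; auto.
Qed.

Lemma frame_unit_inv_morphism : frame_morphism frame_unit_inv.
Proof.
  split; [| split]; [| intros a b | intros S]; apply open_elt_eq.
  - apply bool_emb_top.
  - apply bool_emb_meet.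
  - change (bool_emb (fSup S) = Sup (open_sups (BoolMT L) (img frame_unit_inv S))).
    rewrite bool_emb_Sup. apply Sup_ext. intros y; split.
    + intros [u [Hu ->]]. exists (frame_unit_inv u). split; [exists u |]; auto.
    + intros [w [[u [Hu ->]] ->]]. exists u; auto.
Qed.

Lemma frame_unit_is_iso : @is_iso Frm (Opens (BoolMT L)) L frame_unit.
Proof.
  split; [apply frame_unit_morphism |]. exists frame_unit_inv.
  split; [apply frame_unit_inv_morphism | split]; intros a.
  - apply open_elt_eq. apply bool_emb_radj, proj2_sig.
  - apply bool_radj_emb.
Qed.

End FrameUnit.

Lemma frame_unit_natural {L L' : Frame} (h : L -> L') : frame_morphism h ->
  forall a, h (frame_unit L a) = frame_unit L' (opens_map (bool_mor h) a).
Proof.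
  intros Hh a. unfold frame_unit.
  rewrite opens_map_val, bool_mor_open, bool_radj_emb; auto using bool_mor_proximity.
  apply proj2_sig.
Qed.

Lemma counit_natiso_TD : natiso_to_id incl_TD bool_of_opens_functor.
Proof.
  exists (fun A => counit (proj1_sig A)). split.
  - intros A. apply counit_is_iso.
  - intros A B f Hf. exact (counit_natural f Hf).
Qed.

Lemma counit_natiso : natiso_to_id bool_of_opens_functor incl_TD.
Proof.
  exists counit. split; [exact counit_is_iso |].
  intros M N f Hf. exact (counit_natural f Hf).
Qed.

Lemma frame_unit_natiso : natiso_to_id bool_functor opens_functor_TD.
Proof.
  exists frame_unit. split; [exact frame_unit_is_iso |].
  intros L L' h Hh. exact (frame_unit_natural h Hh).
Qed.

Lemma counit_natiso_opens : natiso_to_id opens_functor_TD bool_functor.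
Proof.
  exists (fun A => counit (proj1_sig A)). split.
  - intros A. apply counit_is_iso.
  - intros A B f Hf. exact (counit_natural f Hf).
Qed.

Theorem theorem4p18 :
  is_equivalence incl_TD /\ equivalent Frm TDMTP.
Proof.
  split.
  - exists bool_of_opens_functor. split; [apply counit_natiso_TD | apply counit_natiso].
  - exists bool_functor, opens_functor_TD.
    split; [apply frame_unit_natiso | apply counit_natiso_opens].
Qed.
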